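(* Let $(A,\cdot,[-,-])$ be a transposed Poisson algebra and let $\mathcal B$ be a nondegenerate symmetric bilinear form on $A$ which is invariant on $(A,\cdot)$ (i.e. $\mathcal B(x\cdot y,z)=\mathcal B(x,y\cdot z)$ for all $x,y,z$) and is a commutative 2-cocycle on $(A,[-,-])$. Define $\circ$ on $A$ by $\mathcal B(x\circ y,z)=\mathcal B(y,[x,z])$ for all $x,y,z\in A$. Then $(A,\cdot,\circ)$ is an anti-pre-Lie Poisson algebra.
   Context: All vector spaces are finite-dimensional over a field $\mathbb F$ of characteristic $0$. A transposed Poisson algebra is $(A,\cdot,[-,-])$ with $(A,\cdot)$ commutative associative, $(A,[-,-])$ a Lie algebra, and $2z\cdot[x,y]=[z\cdot x,y]+[x,z\cdot y]$ for all $x,y,z$. A commutative 2-cocycle on a Lie algebra is a symmetric bilinear form with $\mathcal B([x,y],z)+\mathcal B([y,z],x)+\mathcal B([z,x],y)=0$. For a bilinear operation $\circ$ write $[x,y]_\circ=x\circ y-y\circ x$; an anti-pre-Lie algebra is $(A,\circ)$ with $x\circ(y\circ z)-y\circ(x\circ z)=[y,x]_\circ\circ z$ and $[x,y]_\circ\circ z+[y,z]_\circ\circ x+[z,x]_\circ\circ y=0$. An anti-pre-Lie Poisson algebra is $(A,\cdot,\circ)$ with $(A,\cdot)$ commutative associative, $(A,\circ)$ anti-pre-Lie, and $2(x\circ y)\cdot z-2(y\circ x)\cdot z=y\cdot(x\circ z)-x\cdot(y\circ z)$, $2x\circ(y\cdot z)=(z\cdot x)\circ y+z\cdot(x\circ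 y)$ for all $x,y,z$. *)

From HB Require Import structures.
From mathcomp Require Import all_boot all_order all_algebra.
Set Implicit Arguments. Unset Strict Implicit. Unset Printing Implicit Defensive.
Import GRing.Theory.
Local Open Scope ring_scope.

Section Defs.
Variables (F : fieldType) (A : vectType F).

Definition tp_bilinear_op (m : A -> A -> A) : Prop :=
  (forall a x y z, m (a *: x + y) z = a *: m x z + m y z) /\
  (forall a x y z, m z (a *: x + y) = a *: m z x + m z y).

Definition tp_bilinear_form (B : A -> A -> F) : Prop :=
  (forall a x y z, B (a *: x + y) z = a * B x z + B y z) /\
  (forall a x y z, B z (a *: x + y) = a * B z x + B z y).

Definition tp_symmetric_form (B : A -> A -> F) : Prop := forall x y, B x y = B y x.

Definition tp_nondegenerate_form (B : A -> A -> F) : Prop :=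
  forall x, (forall y, B x y = 0) -> x = 0.

Definition tp_commutative_associative (mul : A -> A -> A) : Prop :=
  tp_bilinear_op mul /\ (forall x y, mul x y = mul y x) /\
  (forall x y z, mul (mul x y) z = mul x (mul y z)).

Definition tp_lie_algebra (br : A -> A -> A) : Prop :=
  tp_bilinear_op br /\ (forall x, br x x = 0) /\
  (forall x y z, br x (br y z) + br y (br z x) + br z (br x y) = 0).

Definition tp_transposed_poisson (mul br : A -> A -> A) : Prop :=
  tp_commutative_associative mul /\ tp_lie_algebra br /\
  (forall x y z, 2%:R *: mul z (br x y) = br (mul z x) y + br x (mul z y)).

Definition tp_invariant_form (B : A -> A -> F) (mul : A -> A -> A) : Prop :=
  forall x y z, B (mul x y) z = B x (mul y z).

Definition tp_commutative_2cocycle (B : A -> A -> F) (br : A -> A -> A) : Prop :=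
  tp_symmetric_form B /\
  (forall x y z, B (br x y) z + B (br y z) x + B (br z x) y = 0).

Definition tp_commutator (o : A -> A -> A) (x y : A) : A := o x y - o y x.

Definition tp_anti_pre_lie (o : A -> A -> A) : Prop :=
  tp_bilinear_op o /\
  (forall x y z, o x (o y z) - o y (o x z) = o (tp_commutator o y x) z) /\
  (forall x y z, o (tp_commutator o x y) z + o (tp_commutator o y z) x
                 + o (tp_commutator o z x) y = 0).

Definition tp_anti_pre_lie_poisson (mul o : A -> A -> A) : Prop :=
  tp_commutative_associative mul /\ tp_anti_pre_lie o /\
  (forall x y z, 2%:R *: mul (o x y) z - 2%:R *: mul (o y x) z
                 = mul y (o x z) - mul x (o y z)) /\
  (forall x y z, 2%:R *: o x (mul y z) = o (mul z x) y + mul z (o x y)).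

End Defs.

From HB Require Import structures.
From mathcomp Require Import all_boot all_algebra sesquilinear.
From mathcomp Require Import ring.
Import GRing.Theory.
Local Open Scope ring_scope.
Set Implicit Arguments.

(* By nondegeneracy every identity for [circ] may be checked after pairing with
   an arbitrary [w]; the defining relation B (x o y) w = B y [x, w] makes left
   o-multiplication by x the B-adjoint of ad x. The cocycle condition then gives
   x o y - y o x = [x, y], the Jacobi identity gives the first anti-pre-Lie
   identity, and the transposed Poisson identity together with invariance gives
   both compatibilities. For the cyclic anti-pre-Lie identity, the sum
   S = B(z, [[x,y],w]) + B(x, [[y,z],w]) + B(y, [[z,x],w]) is rewritten through
   the cocycle condition in two ways, once as
   B([x,y],[z,w]) + B([y,z],[x,w]) + B([z,x],[y,w]) and once as the negative of
   that sum, so 2 S = 0. *)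

Lemma tp_bilinear_op_bilinear (F : fieldType) (A : vectType F) (m : A -> A -> A) :
  tp_bilinear_op m -> bilinear_for *:%R *:%R m.
Proof. by case=> ml mr; split=> z a x y; [exact: ml | exact: mr]. Qed.

Lemma tp_bilinear_form_bilinear (F : fieldType) (A : vectType F) (B : A -> A -> F) :
  tp_bilinear_form B -> bilinear_for *%R *%R B.
Proof. by case=> Bl Br; split=> z a x y; [exact: Bl | exact: Br]. Qed.

Section CocycleAntiPreLie.
Variables (F : fieldType) (A : vectType F) (br : A -> A -> A) (B : A -> A -> F).
Hypothesis br_lie : tp_lie_algebra br.
Hypothesis B_bilinear : tp_bilinear_form B.
Hypothesis B_cocycle : tp_commutative_2cocycle B br.

HB.instance Definition _ :=
  bilinear_isBilinear.Build F A A A *:%R *:%R br (tp_bilinear_op_bilinear br_lie.1).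
HB.instance Definition _ :=
  bilinear_isBilinear.Build F A A F *%R *%R B (tp_bilinear_form_bilinear B_bilinear).

Let brxx : forall x, br x x = 0 := br_lie.2.1.
Let jacobi := br_lie.2.2.
Let B_sym : forall x y, B x y = B y x := B_cocycle.1.

Lemma br_anticomm x y : br x y = - br y x.
Proof.
have := brxx (x + y); rewrite linearDl !linearDr /= !brxx add0r addr0.
by move/eqP; rewrite addr_eq0 => /eqP.
Qed.

Lemma br_derivation x y z : br x (br y z) = br (br x y) z + br y (br x z).
Proof.
have := jacobi x y z; rewrite (br_anticomm z (br x y)) (br_anticomm z x) linearNr /=.
by move/eqP; rewrite -addrA -opprD subr_eq0 addrC => /eqP.
Qed.

Lemma jacobi_l x y z : br (br x y) z + br (br y z) x + br (br z x) y = 0.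
Proof.
rewrite (br_anticomm (br x y)) (br_anticomm (br y z)) (br_anticomm (br z x)).
by rewrite -!opprD jacobi oppr0.
Qed.

Lemma B_brE x y z : B (br x y) z = B y (br x z) - B x (br y z).
Proof.
have := B_cocycle.2 x y z.
rewrite (B_sym (br y z)) (B_sym (br z x)) (br_anticomm z x).
by rewrite linearNr /= => h; apply: subr0_eq; rewrite -h; ring.
Qed.

Lemma pairing_double_br_cyclic x y z w :
  B z (br (br x y) w) + B x (br (br y z) w) + B y (br (br z x) w) =
  B (br x y) (br z w) + B (br y z) (br x w) + B (br z x) (br y w).
Proof.
have jacw : B w (br (br x y) z) + B w (br (br y z) x) + B w (br (br z x) y) = 0.
  by rewrite -!linearDr /= jacobi_l linear0r.
rewrite (B_sym z) (B_sym x) (B_sym y) !(B_brE (br _ _) w).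
rewrite (br_anticomm w z) (br_anticomm w x) (br_anticomm w y) !linearNr /=.
by apply: subr0_eq; rewrite -jacw; ring.
Qed.

Lemma pairing_br_br_cyclic x y z w :
  B (br x y) (br z w) + B (br y z) (br x w) + B (br z x) (br y w) =
  - (B z (br (br x y) w) + B x (br (br y z) w) + B y (br (br z x) w)).
Proof.
rewrite !B_brE (br_derivation x z) (br_derivation y x) (br_derivation z y).
rewrite (br_anticomm x z) (br_anticomm y x) (br_anticomm z y).
rewrite !linearDr /= !linearNl /= !linearNr /=.
ring.
Qed.

Hypothesis two_neq0 : 2%:R != 0 :> F.

Lemma cocycle_double_br_cyclic x y z w :
  B z (br (br x y) w) + B x (br (br y z) w) + B y (br (br z x) w) = 0.
Proof.
have S_opp := pairing_double_br_cyclic x y z w.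
rewrite pairing_br_br_cyclic in S_opp.
move/eqP: S_opp; rewrite -subr_eq0 opprK -mulr2n -mulr_natl.
by rewrite mulf_eq0 (negPf two_neq0) => /eqP.
Qed.

Section DualProduct.
Variable circ : A -> A -> A.
Hypothesis B_nondeg : tp_nondegenerate_form B.
Hypothesis circE : forall x y z, B (circ x y) z = B y (br x z).

Lemma pairing_inj u v : (forall w, B u w = B v w) -> u = v.
Proof.
move=> Buv; apply/eqP; rewrite -subr_eq0; apply/eqP/B_nondeg => w.
by rewrite linearBl /= Buv subrr.
Qed.

Lemma circ_bilinear : tp_bilinear_op circ.
Proof.
split=> a x y z; apply: pairing_inj => w.
  by rewrite linearPl /= !circE linearPl linearPr.
by rewrite linearPl /= !circE linearPl.
Qed.

Lemma circ_commutator x y : circ x y - circ y x = br x y.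
Proof. by apply: pairing_inj => w; rewrite linearBl /= !circE B_brE. Qed.

Lemma circ_anti_pre_lie : tp_anti_pre_lie circ.
Proof.
split; first exact: circ_bilinear.
rewrite /tp_commutator; split=> x y z; rewrite !circ_commutator.
  apply: pairing_inj => w.
  by rewrite linearBl /= !circE br_derivation linearDr /= addrK.
apply: pairing_inj => w.
by rewrite !linearDl /= !circE linear0l cocycle_double_br_cyclic.
Qed.

Section Poisson.
Variable mul : A -> A -> A.
Hypothesis mul_comm_assoc : tp_commutative_associative mul.
Hypothesis B_invariant : tp_invariant_form B mul.
Hypothesis transposed_poisson :
  forall x y z, 2%:R *: mul z (br x y) = br (mul z x) y + br x (mul z y).

HB.instance Definition _ :=
  bilinear_isBilinear.Build F A A A *:%R *:%R mul
    (tp_bilinear_op_bilinear mul_comm_assoc.1).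

Let mulC : forall x y, mul x y = mul y x := mul_comm_assoc.2.1.

Lemma transposed_poisson_pairing u x y z :
  2%:R * B u (mul z (br x y)) = B u (br (mul z x) y) + B u (br x (mul z y)).
Proof. by rewrite -linearDr -transposed_poisson linearZr_LR. Qed.

Lemma circ_mul_commutator x y z :
  2%:R *: mul (circ x y) z - 2%:R *: mul (circ y x) z =
  mul y (circ x z) - mul x (circ y z).
Proof.
rewrite -scalerBr -linearBl /= circ_commutator; apply: pairing_inj => w.
rewrite linearBl linearZl_LR /= (mulC y) (mulC x) !B_invariant !circE.
rewrite B_sym B_invariant transposed_poisson_pairing.
by rewrite (mulC w x) (mulC w y) (br_anticomm (mul x w)) linearNr /= addrC.
Qed.

Lemma circ_mul_compat x y z :
  2%:R *: circ x (mul y z) = circ (mul z x) y + mul z (circ x y).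
Proof.
apply: pairing_inj => w.
rewrite linearZl_LR linearDl /= (mulC z (circ x y)) !B_invariant !circE.
by rewrite B_invariant transposed_poisson_pairing.
Qed.

Lemma dual_anti_pre_lie_poisson : tp_anti_pre_lie_poisson mul circ.
Proof.
split; first exact: mul_comm_assoc.
split; first exact: circ_anti_pre_lie.
by split; [exact: circ_mul_commutator | exact: circ_mul_compat].
Qed.

End Poisson.
End DualProduct.
End CocycleAntiPreLie.

Theorem proposition3p46 (F : fieldType) (A : vectType F)
    (charF0 : [pchar F] =i pred0)
    (mul br : A -> A -> A) (B : A -> A -> F) (circ : A -> A -> A) :
  tp_transposed_poisson mul br ->
  tp_bilinear_form B -> tp_symmetric_form B -> tp_nondegenerate_form B ->
  tp_invariant_form B mul -> tp_commutative_2cocycle B br ->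
  (forall x y z, B (circ x y) z = B y (br x z)) ->
  tp_anti_pre_lie_poisson mul circ.
Proof.
(* Symmetry of [B] is also part of [tp_commutative_2cocycle]. *)
move=> [mul_comm_assoc [br_lie transposed_poisson]] B_bilinear _ B_nondeg.
move=> B_invariant B_cocycle circE.
have two_neq0 : 2%:R != 0 :> F by rewrite (pcharf0P _).1.
exact: (dual_anti_pre_lie_poisson br_lie B_bilinear B_cocycle two_neq0 circ B_nondeg
          circE mul_comm_assoc B_invariant transposed_poisson).
Qed.
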